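(* For a finite word $\pi$ of distinct positive integers, let $\Psi(\pi)$ be the increasing binary tree defined recursively by: $\Psi(\emptyset)=\emptyset$; otherwise write $\pi=\sigma\,i\,\tau$ with $i$ the least letter of $\pi$, and let $\Psi(\pi)$ have root $i$ with left subtree $\Psi(\sigma)$ and right subtree $\Psi(\tau)$. Then $\Psi$ restricts to a bijection from the set $\mathrm{And}^I_n$ of André I permutations of $[n]$ onto the set $\mathcal{T}^I_n$ of André I trees on $[n]$, and to a bijection from the set $\mathrm{And}^{II}_n$ of André II permutations of $[n]$ onto the set $\mathcal{T}^{II}_n$ of André II trees on $[n]$. Moreover, for every such $\pi$ with $T=\Psi(\pi)$, $l(T)=\operatorname{des}(\pi)$ and $\operatorname{inv}(T)=\operatorname{inv}(\pi)$.
   Context: $[n]=\{1,\dots,n\}$. André permutations: the empty word and every single-letter word are both André I and André II permutations. A word $\sigma$ of $m\ge2$ distinct integers, written $\sigma=\tau\,\min(\sigma)\,\tau'$, is an André I permutation if $\tau$ and $\tau'$ are André I permutations and the maximum letter of $\tau\tau'$ lies in $\tau'$; it is an André II permutation if $\tau,\tau'$ are André II permutations and the minimum letter of $\tau\tau'$ lies in $\tau'$. For a permutation $\pi=\pi_1\cdots\pi_n$ with convention $\pi_0=\pi_{n+1}=0$, $\operatorname{des}(\pi)=\#\{0\le i\le n:\pi_i>\pi_{i+1}\}$ and $\operatorname{inv}(\pi)=\#\{(i,j):i<j,\ \pi_i>\pi_j\}$. An increasing binary tree on $[n]$ is a rooted tree on vertex set $[n]$, labels increasing along paths from the root, each vertex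 having at most a left child and at most a right child (distinguished). An André I tree is an increasing binary tree in which, for every vertex, the maximum label of its left subtree is smaller than that of its right subtree, whenever at least one is nonempty, with the maximum of an empty tree taken to be $0$. An André II tree is an increasing binary tree in which, for every vertex with at least one child, the minimum label of its left subtree is larger than that of its right subtree, the minimum of an empty tree taken to be $+\infty$. $l(T)$ is the number of leaves of $T$. An inversion of an increasing binary tree $T$ is a pair of vertices $(i,j)$ with $i>j$ such that either (1) $j$ lies to the right of the path from the root to $i$, i.e. $j$ belongs to the right subtree of some vertex $v$ of this path whose left child lies on the path; or (2) $j$ lies on the path from the root to $i$ and the left child of $j$ lies on this path. $\operatorname{inv}(T)$ is the number of inversions. *)

From mathcomp Require Import all_boot.
Set Implicit Arguments. Unset Strict Implicit. Unset Printing Implicit Defensive.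

Definition seqmin (s : seq nat) : nat := foldr minn (head 0 s) s.
Definition seqmax (s : seq nat) : nat := foldr maxn 0 s.

Fixpoint andreI_aux (k : nat) (s : seq nat) : bool :=
  match k with
  | 0 => true
  | k'.+1 =>
      if size s <= 1 then true else
      let i := index (seqmin s) s in
      let t := take i s in let t' := drop i.+1 s in
      [&& andreI_aux k' t, andreI_aux k' t' & seqmax (t ++ t') \in t']
  end.
Definition andreI (s : seq nat) : bool := andreI_aux (size s) s.

Fixpoint andreII_aux (k : nat) (s : seq nat) : bool :=
  match k with
  | 0 => true
  | k'.+1 =>
      if size s <= 1 then true else
      let i := index (seqmin s) s in
      let t := take i s in let t' := drop i.+1 s in
      [&& andreII_aux k' t, andreII_aux k' t' & seqmin (t ++ t') \in t']
  end.
Definition andreII (s : seq nat) : bool := andreII_aux (size s) s.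

Definition is_perm_word (n : nat) (s : seq nat) : bool := perm_eq s (iota 1 n).
Definition AndI (n : nat) (s : seq nat) : bool := is_perm_word n s && andreI s.
Definition AndII (n : nat) (s : seq nat) : bool := is_perm_word n s && andreII s.

(* des with pi_0 = pi_{n+1} = 0 *)
Definition des (s : seq nat) : nat :=
  let p := 0 :: s ++ [:: 0] in
  \sum_(0 <= i < (size s).+1) (nth 0 p i.+1 < nth 0 p i).
Definition inv_word (s : seq nat) : nat :=
  \sum_(0 <= i < size s) \sum_(i.+1 <= j < size s) (nth 0 s j < nth 0 s i).

Inductive btree : Type := Leaf | Node of btree & nat & btree.

Fixpoint labels (t : btree) : seq nat :=
  match t with Leaf => [::] | Node l x r => labels l ++ x :: labels r end.

Definition root (t : btree) : option nat :=
  match t with Leaf => None | Node _ x _ => Some x end.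

Fixpoint increasing (t : btree) : bool :=
  match t with
  | Leaf => true
  | Node l x r => [&& all (fun y => x < y) (labels l ++ labels r),
                      increasing l & increasing r]
  end.

Definition inc_tree_on (n : nat) (t : btree) : bool :=
  perm_eq (labels t) (iota 1 n) && increasing t.

Definition is_leaf (t : btree) : bool := if t is Leaf then true else false.

(* max label, with max of the empty tree = 0 *)
Definition maxlab (t : btree) : nat := foldr maxn 0 (labels t).
(* min label, with None standing for +infinity (empty tree) *)
Definition minlab (t : btree) : option nat :=
  if labels t is x :: s then Some (foldr minn x s) else None.
Definition lt_oinf (a b : option nat) : bool :=
  match a, b with
  | Some x, Some y => x < y
  | Some _, None => true
  | None, _ => false
  end.

Fixpoint andreIT (t : btree) : bool :=
  match t with
  | Leaf => true
  | Node l x r =>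
      [&& (if is_leaf l && is_leaf r then true else maxlab l < maxlab r),
          andreIT l & andreIT r]
  end.
Fixpoint andreIIT (t : btree) : bool :=
  match t with
  | Leaf => true
  | Node l x r =>
      [&& (if is_leaf l && is_leaf r then true else lt_oinf (minlab r) (minlab l)),
          andreIIT l & andreIIT r]
  end.

Definition AndreITree (n : nat) (t : btree) : bool := inc_tree_on n t && andreIT t.
Definition AndreIITree (n : nat) (t : btree) : bool := inc_tree_on n t && andreIIT t.

(* number of leaves (vertices with no child) *)
Fixpoint leaves (t : btree) : nat :=
  match t with
  | Leaf => 0
  | Node Leaf _ Leaf => 1
  | Node l _ r => leaves l + leaves r
  end.

(* the path from the root to vertex i, as the list of subtrees rooted at
   the vertices of the path (root first, the node of i last) *)
Fixpoint path_to (t : btree) (i : nat) : seq btree :=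
  match t with
  | Leaf => [::]
  | Node l x r =>
      if x == i then [:: t]
      else if i \in labels l then t :: path_to l i
      else if i \in labels r then t :: path_to r i
      else [::]
  end.

(* (i,j) is an inversion of t: i > j and either (1) j is in the right subtree
   of a vertex v of the path whose left child is on the path, or (2) j is on
   the path and its left child is on the path. *)
Definition tree_inv_pair (t : btree) (i j : nat) : bool :=
  let P := path_to t i in
  (j < i) &&
  has (fun v => match v with
                | Leaf => false
                | Node l x r =>
                    (root l \in map root P) && ((j \in labels r) || (j == x))
                end) P.

Definition inv_tree (t : btree) : nat :=
  \sum_(i <- labels t) \sum_(j <- labels t) tree_inv_pair t i j.

Fixpoint psi_aux (k : nat) (s : seq nat) : btree :=
  match k with
  | 0 => Leaf
  | k'.+1 =>
      if s is [::] then Leaf else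
      let m := seqmin s in let i := index m s in
      Node (psi_aux k' (take i s)) m (psi_aux k' (drop i.+1 s))
  end.
Definition Psi (s : seq nat) : btree := psi_aux (size s) s.

From Pilot Require Import Defs.
From mathcomp Require Import all_boot zify.
Set Implicit Arguments. Unset Strict Implicit. Unset Printing Implicit Defensive.

(* The root of an increasing tree is the least letter of its in-order word
   [labels t] and splits that word into the words of the two subtrees, so [Psi]
   and [labels] are mutually inverse between words of distinct letters and
   increasing trees; under this correspondence the Andre conditions on the
   factors of a word become the Andre conditions on the subtrees.
   In the word [labels t ++ [:: 0]] a vertex is followed by the leftmost vertex
   of its right subtree (a larger letter) when it has a right child, and by an
   ancestor or the final 0 (a smaller letter) otherwise; as no vertex of an
   Andre tree has a left child only, descents correspond to leaves.
   For inversions, an inversion (i, j) of [Node l x r] with i in l is an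
   inversion of l or has j = x or j in r, and one with i in r is an inversion
   of r: exactly the inversions of [labels l ++ x :: labels r]. *)

Lemma uniq_cat_notin (a b : seq nat) y : uniq (a ++ b) -> y \in a -> y \notin b.
Proof.
by rewrite cat_uniq => /and3P[_ /hasPn disj _] ya; apply: contraL ya => /disj.
Qed.

Lemma foldr_minn_le a s y : y \in a :: s -> foldr minn a s <= y.
Proof.
elim: s => [|b s IH]; first by rewrite inE => /eqP->.
rewrite /= !inE geq_min => /or3P[ya|/eqP->|ys]; first by rewrite IH ?inE ?ya ?orbT.
  by rewrite leqnn.
by rewrite IH ?inE ?ys ?orbT.
Qed.

Lemma foldr_minn_mem a s : foldr minn a s \in a :: s.
Proof.
elim: s => [|b s IH] /=; first exact: mem_head.
rewrite /minn; case: ifP => _; first by rewrite !inE eqxx orbT.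
by move: IH; rewrite !inE => /orP[]->; rewrite ?orbT.
Qed.

Lemma seqmin_le s y : y \in s -> seqmin s <= y.
Proof. by case: s => // a s ys; rewrite /seqmin /= geq_min foldr_minn_le ?orbT. Qed.

Lemma seqmin_mem s : s != [::] -> seqmin s \in s.
Proof.
case: s => // a s _; rewrite /seqmin /= /minn.
by case: ifP => _; [exact: mem_head | exact: foldr_minn_mem].
Qed.

Lemma seqmin_eq s m : m \in s -> {in s, forall y, m <= y} -> seqmin s = m.
Proof.
move=> ms m_le; have s0 : s != [::] by apply: contraTneq ms => ->.
by apply/eqP; rewrite eqn_leq seqmin_le // m_le // seqmin_mem.
Qed.

Lemma seqmin_cat a b : a != [::] -> b != [::] ->
  seqmin (a ++ b) = minn (seqmin a) (seqmin b).
Proof.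
move=> a0 b0; apply: seqmin_eq => [|y]; last first.
  by rewrite mem_cat geq_min => /orP[] /seqmin_le ->; rewrite ?orbT.
by rewrite /minn mem_cat; case: ifP => _; rewrite seqmin_mem ?orbT.
Qed.

Lemma seqmax_cat a b : seqmax (a ++ b) = maxn (seqmax a) (seqmax b).
Proof. by rewrite /seqmax !foldrE big_cat. Qed.

Lemma seqmax_mem s : seqmax s \in 0 :: s.
Proof.
elim: s => [|a s IH] /=; first exact: mem_head.
rewrite /maxn; case: ifP => _; last by rewrite !inE eqxx orbT.
by move: IH; rewrite !inE => /orP[]->; rewrite ?orbT.
Qed.

(* [minlab t] unfolds to [omin (labels t)]. *)
Definition omin (s : seq nat) : option nat :=
  if s is x :: s' then Some (foldr minn x s') else None.

Lemma omin_seqmin s : s != [::] -> omin s = Some (seqmin s).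
Proof.
case: s => // a s _; congr Some; rewrite /seqmin /=.
by apply/esym/minn_idPr; rewrite foldr_minn_le ?mem_head.
Qed.

Lemma mem_seqmax_cat a b : uniq (a ++ b) -> 0 \notin b ->
  (seqmax (a ++ b) \in b) = (seqmax a < seqmax b).
Proof.
move=> ab_uniq b0; rewrite seqmax_cat /maxn; case: ltnP => [ab|ba].
  by have /predU1P[mb0|//] := seqmax_mem b; rewrite mb0 in ab.
apply/negbTE; have /predU1P[->//|] := seqmax_mem a.
exact: uniq_cat_notin.
Qed.

Lemma mem_seqmin_cat a b : uniq (a ++ b) ->
  (seqmin (a ++ b) \in b) = lt_oinf (omin b) (omin a).
Proof.
move=> ab_uniq; have [->|b0] := eqVneq b [::]; first by case: (omin a).
have [a0|a0] := eqVneq a [::]; first by rewrite a0 omin_seqmin //= seqmin_mem.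
rewrite !omin_seqmin //= seqmin_cat // /minn; case: ltnP => [ab|ba].
  by rewrite ltnNge (ltnW ab); apply/negbTE/uniq_cat_notin/seqmin_mem.
rewrite seqmin_mem //; apply/esym; rewrite ltn_neqAle ba andbT.
by apply: contraTneq (seqmin_mem b0) => ->; apply/uniq_cat_notin/seqmin_mem.
Qed.

Lemma take_index_cat (a b : seq nat) x : x \notin a ->
  take (index x (a ++ x :: b)) (a ++ x :: b) = a.
Proof. by move=> xa; rewrite index_cat (negbTE xa) /= eqxx addn0 take_size_cat. Qed.

Lemma drop_index_cat (a b : seq nat) x : x \notin a ->
  drop (index x (a ++ x :: b)).+1 (a ++ x :: b) = b.
Proof.
move=> xa; rewrite index_cat (negbTE xa) /= eqxx addn0 -cat_rcons.
by rewrite drop_size_cat // size_rcons.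
Qed.

Lemma cat_take_seqmin_drop s : s != [::] ->
  take (index (seqmin s) s) s ++ seqmin s :: drop (index (seqmin s) s).+1 s = s.
Proof.
move=> s0; have ms : index (seqmin s) s < size s by rewrite index_mem seqmin_mem.
rewrite -[RHS](cat_take_drop (index (seqmin s) s)) (drop_nth (seqmin s) ms).
by rewrite nth_index // seqmin_mem.
Qed.

Lemma size_seqmin_split k s : s != [::] -> size s <= k.+1 ->
  size (take (index (seqmin s) s) s) <= k /\
  size (drop (index (seqmin s) s).+1 s) <= k.
Proof.
move=> s0; have := seqmin_mem s0; rewrite -index_mem size_drop => ms.
by rewrite size_takel ?(ltnW ms); lia.
Qed.

Lemma psi_aux_cons k s : s != [::] ->
  psi_aux k.+1 s = Node (psi_aux k (take (index (seqmin s) s) s)) (seqmin s)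
                        (psi_aux k (drop (index (seqmin s) s).+1 s)).
Proof. by case: s. Qed.

Lemma labels_psi_aux k s : size s <= k -> labels (psi_aux k s) = s.
Proof.
elim: k s => [|k IH] s; first by case: s.
have [->//|s0] := eqVneq s [::].
move=> /(size_seqmin_split s0)[take_le drop_le].
by rewrite psi_aux_cons //= !IH // cat_take_seqmin_drop.
Qed.

Lemma increasing_psi_aux k s : size s <= k -> uniq s -> increasing (psi_aux k s).
Proof.
elim: k s => [|k IH] s; first by case: s.
have [->//|s0] := eqVneq s [::].
move=> /(size_seqmin_split s0)[take_le drop_le] s_uniq.
rewrite psi_aux_cons //= !labels_psi_aux // !IH ?take_uniq ?drop_uniq ?andbT //.
have s_split := cat_take_seqmin_drop s0.
move: s_uniq; rewrite -{1}s_split -cat1s uniq_catCA /= => /andP[m_notin _].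
apply/allP => y y_in; rewrite ltn_neqAle seqmin_le ?andbT.
  by apply/eqP => m_y; move: y_in; rewrite -m_y (negbTE m_notin).
by move: y_in; rewrite mem_cat => /orP[/mem_take|/mem_drop].
Qed.

Lemma labels_Psi s : labels (Psi s) = s.
Proof. exact: labels_psi_aux. Qed.

Lemma increasing_Psi s : uniq s -> increasing (Psi s).
Proof. exact: increasing_psi_aux. Qed.

Lemma Psi_inj : injective Psi.
Proof. exact: can_inj labels_Psi. Qed.

Lemma is_leafP t : reflect (t = Leaf) (is_leaf t).
Proof. by case: t; constructor. Qed.

Lemma labels_eq_nil t : (labels t == [::]) = is_leaf t.
Proof. by case: t => //= l x r; case: (labels l). Qed.

Lemma size_labels_node_le1 l x r :
  (size (labels l ++ x :: labels r) <= 1) = is_leaf l && is_leaf r.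
Proof. by rewrite size_cat /= addnS ltnS leqn0 addn_eq0 !size_eq0 !labels_eq_nil. Qed.

Lemma uniq_labels_node l x r : uniq (labels (Node l x r)) ->
  [/\ uniq (labels l ++ labels r), uniq (labels l), uniq (labels r)
    & x \notin labels l ++ labels r].
Proof.
rewrite /= -cat1s uniq_catCA /= => /andP[x_notin lr_uniq].
by split=> //; move: lr_uniq; rewrite cat_uniq => /and3P[].
Qed.

Lemma notin_labels_node z l x r : z \notin labels (Node l x r) ->
  [/\ z \notin labels l, z != x & z \notin labels r].
Proof. by rewrite /= mem_cat inE !negb_or => /and3P[]. Qed.

Lemma size_labels_node_le k l x r : size (labels (Node l x r)) <= k.+1 ->
  size (labels l) <= k /\ size (labels r) <= k.
Proof. by rewrite /= size_cat /=; lia. Qed.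

Lemma root_notin_left l x r : increasing (Node l x r) -> x \notin labels l.
Proof.
move=> /and3P[/allP x_lt _ _]; apply/negP => x_in.
by have := x_lt x; rewrite mem_cat x_in ltnn => /(_ isT).
Qed.

Lemma seqmin_node l x r : increasing (Node l x r) ->
  seqmin (labels l ++ x :: labels r) = x.
Proof.
move=> /and3P[/allP x_lt _ _]; apply: seqmin_eq => [|y].
  by rewrite mem_cat mem_head orbT.
rewrite mem_cat inE => /or3P[y_in|/eqP->//|y_in]; apply: ltnW; apply: x_lt;
  by rewrite mem_cat y_in ?orbT.
Qed.

Lemma labels_node_split l x r (s := labels l ++ x :: labels r) :
  increasing (Node l x r) ->
  [/\ seqmin s = x, take (index x s) s = labels l & drop (index x s).+1 s = labels r].
Proof.
move=> t_inc; have x_notin := root_notin_left t_inc.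
by rewrite seqmin_node // take_index_cat // drop_index_cat.
Qed.

Lemma psi_aux_labels k t : size (labels t) <= k -> increasing t ->
  psi_aux k (labels t) = t.
Proof.
elim: k t => [|k IH] [|l x r] //; first by rewrite /= size_cat addnS.
move=> /size_labels_node_le[l_size r_size] t_inc.
case/and3P: (t_inc) => _ l_inc r_inc.
have [min_x take_l drop_r] := labels_node_split t_inc.
by rewrite psi_aux_cons ?labels_eq_nil // [labels _]/= min_x take_l drop_r !IH.
Qed.

Lemma Psi_labels t : increasing t -> Psi (labels t) = t.
Proof. exact: psi_aux_labels. Qed.

Lemma andreI_aux_labels k t : size (labels t) <= k -> increasing t ->
  uniq (labels t) -> 0 \notin labels t -> andreI_aux k (labels t) = andreIT t.
Proof.
elim: k t => [|k IH] [|l x r] //; first by rewrite /= size_cat addnS.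
move=> /size_labels_node_le[l_size r_size] t_inc t_uniq /notin_labels_node[l0 _ r0].
case/and3P: (t_inc) => _ l_inc r_inc.
have [lr_uniq l_uniq r_uniq _] := uniq_labels_node t_uniq.
have [min_x take_l drop_r] := labels_node_split t_inc.
rewrite /= min_x take_l drop_r size_labels_node_le1.
case: ifP => [/andP[/is_leafP-> /is_leafP->]//|_].
by rewrite !IH // mem_seqmax_cat // [RHS]andbC -andbA.
Qed.

Lemma andreII_aux_labels k t : size (labels t) <= k -> increasing t ->
  uniq (labels t) -> andreII_aux k (labels t) = andreIIT t.
Proof.
elim: k t => [|k IH] [|l x r] //; first by rewrite /= size_cat addnS.
move=> /size_labels_node_le[l_size r_size] t_inc t_uniq.
case/and3P: (t_inc) => _ l_inc r_inc.
have [lr_uniq l_uniq r_uniq _] := uniq_labels_node t_uniq.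
have [min_x take_l drop_r] := labels_node_split t_inc.
rewrite /= min_x take_l drop_r size_labels_node_le1.
case: ifP => [/andP[/is_leafP-> /is_leafP->]//|_].
by rewrite !IH // mem_seqmin_cat // [RHS]andbC -andbA.
Qed.

Lemma andreI_labels t : increasing t -> uniq (labels t) -> 0 \notin labels t ->
  andreI (labels t) = andreIT t.
Proof. exact: andreI_aux_labels. Qed.

Lemma andreII_labels t : increasing t -> uniq (labels t) ->
  andreII (labels t) = andreIIT t.
Proof. exact: andreII_aux_labels. Qed.

Lemma perm_word_uniq n s : is_perm_word n s -> uniq s.
Proof. by move/perm_uniq->; apply: iota_uniq. Qed.

Lemma perm_word_neq0 n s : is_perm_word n s -> 0 \notin s.
Proof. by move/perm_mem->; rewrite mem_iota. Qed.

Lemma inc_tree_on_Psi n s : inc_tree_on n (Psi s) = is_perm_word n s.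
Proof.
rewrite /inc_tree_on labels_Psi.
by apply/andb_idr => /perm_word_uniq/increasing_Psi.
Qed.

Lemma AndreITree_Psi n s : AndreITree n (Psi s) = AndI n s.
Proof.
rewrite /AndreITree /AndI inc_tree_on_Psi; apply/andb_id2l => s_perm.
have s_uniq := perm_word_uniq s_perm.
by rewrite -andreI_labels ?labels_Psi ?increasing_Psi // (perm_word_neq0 s_perm).
Qed.

Lemma AndreIITree_Psi n s : AndreIITree n (Psi s) = AndII n s.
Proof.
rewrite /AndreIITree /AndII inc_tree_on_Psi; apply/andb_id2l => s_perm.
have s_uniq := perm_word_uniq s_perm.
by rewrite -andreII_labels ?labels_Psi ?increasing_Psi.
Qed.

Definition descents (x0 : nat) (s : seq nat) : nat :=
  count id (pairmap (fun a b => b < a) x0 s).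

Lemma des_descents s : des s = descents 0 (s ++ [:: 0]).
Proof.
rewrite /descents -sumn_count sumnE big_map (big_nth false) size_pairmap.
rewrite size_cat addn1; apply: eq_big_nat => i /andP[_ i_lt].
by rewrite (nth_pairmap 0) // size_cat addn1.
Qed.

Lemma descents_cat x0 a b :
  descents x0 (a ++ b) = descents x0 a + descents (last x0 a) b.
Proof. by rewrite /descents pairmap_cat count_cat. Qed.

Lemma descents_cons x0 y s : descents x0 (y :: s) = (y < x0) + descents y s.
Proof. by []. Qed.

Lemma descents_split a x w : {in a, forall z, x < z} ->
  descents 0 (a ++ x :: w) = descents 0 (a ++ [:: 0]) + descents x w.
Proof.
move=> x_lt; rewrite !descents_cat !descents_cons addn0 addnA; congr (_ + _ + _).
case/lastP: a x_lt => [//|a y] x_lt; rewrite last_rcons.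
have xy : x < y by apply: x_lt; rewrite mem_rcons mem_head.
by rewrite xy (leq_ltn_trans _ xy).
Qed.

Lemma descents_head x y w : x <= y -> descents x (y :: w) = descents 0 (y :: w).
Proof. by move=> xy; rewrite !descents_cons ltnNge xy. Qed.

Fixpoint no_left_only (t : btree) : bool :=
  if t is Node l _ r then [&& is_leaf r ==> is_leaf l, no_left_only l & no_left_only r]
  else true.

Lemma andreIT_no_left_only t : andreIT t -> no_left_only t.
Proof.
elim: t => [|l IHl x r IHr] //= /and3P[lr_max /IHl-> /IHr->]; rewrite !andbT.
by case: r {IHr} lr_max => //; case: l {IHl} => //= l' y r'; rewrite ltn0.
Qed.

Lemma andreIIT_no_left_only t : andreIIT t -> no_left_only t.
Proof.
elim: t => [|l IHl x r IHr] //= /and3P[lr_min /IHl-> /IHr->]; rewrite !andbT.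
by case: r {IHr} lr_min => //; case: l {IHl}.
Qed.

Lemma leaves_node l x r :
  leaves (Node l x r) = if is_leaf l && is_leaf r then 1 else leaves l + leaves r.
Proof. by case: l; case: r. Qed.

Lemma leaves_descents t : increasing t -> 0 \notin labels t -> no_left_only t ->
  leaves t = descents 0 (labels t ++ [:: 0]).
Proof.
elim: t => [|l IHl x r IHr] // /and3P[/allP x_lt l_inc r_inc].
move=> /notin_labels_node[l0 x_neq0 r0] /and3P[r_leaf_l l_nlo r_nlo].
rewrite [labels _]/= -catA cat_cons descents_split; last first.
  by move=> z z_in; apply: x_lt; rewrite mem_cat z_in.
rewrite -IHl // leaves_node.
case r_labels: (labels r) => [|y w].
  move/eqP: r_labels; rewrite labels_eq_nil => r_leaf.
  have /is_leafP-> := implyP r_leaf_l r_leaf; rewrite r_leaf /=.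
  by rewrite descents_cons lt0n eq_sym x_neq0.
have r_node : ~~ is_leaf r by rewrite -labels_eq_nil r_labels.
rewrite (negbTE r_node) andbF cat_cons descents_head; last first.
  by apply/ltnW/x_lt; rewrite mem_cat r_labels mem_head orbT.
by rewrite -cat_cons -r_labels -IHr.
Qed.

Lemma leaves_des t : increasing t -> 0 \notin labels t -> no_left_only t ->
  leaves t = des (labels t).
Proof. by move=> *; rewrite des_descents leaves_descents. Qed.

Lemma inv_word_cons a s :
  inv_word (a :: s) = \sum_(j <- s) (j < a) + inv_word s.
Proof.
rewrite /inv_word [size _]/= big_nat_recl // big_add1 /=; congr (_ + _).
  by rewrite [RHS](big_nth 0).
by apply: eq_bigr => i _; rewrite big_add1.
Qed.

Lemma inv_word_cat a b :
  inv_word (a ++ b) = inv_word a + inv_word b + \sum_(i <- a) \sum_(j <- b) (j < i).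
Proof.
elim: a => [|z a IH]; first by rewrite big_nil addn0 [inv_word [::]]/inv_word big_geq.
by rewrite cat_cons !inv_word_cons big_cat IH big_cons /=; lia.
Qed.

Definition inv_node (M : seq (option nat)) (j : nat) (v : btree) : bool :=
  if v is Node l x r then (Defs.root l \in M) && ((j \in labels r) || (j == x))
  else false.

Lemma tree_inv_pairE t i j : tree_inv_pair t i j =
  (j < i) && has (inv_node (map Defs.root (path_to t i)) j) (path_to t i).
Proof. by []. Qed.

Lemma eq_has_path_to t i (a1 a2 : pred btree) :
  (forall v, {subset labels v <= labels t} -> a1 v = a2 v) ->
  has a1 (path_to t i) = has a2 (path_to t i).
Proof.
elim: t => [|l IHl x r IHr] //= a12.
case: ifP => _ /=; first by rewrite a12.
case: ifP => _ /=.
  by rewrite a12 // IHl // => v v_sub; apply: a12 => y /v_sub; rewrite mem_cat => ->.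
case: ifP => _ //=.
rewrite a12 // IHr // => v v_sub; apply: a12 => y /v_sub y_in.
by rewrite mem_cat inE y_in !orbT.
Qed.

Lemma map_root_path_to t i :
  {subset map Defs.root (path_to t i) <= map Some (labels t)}.
Proof.
elim: t => [|l IHl x r IHr] //= o; rewrite map_cat /= mem_cat inE.
case: ifP => _; first by rewrite inE => ->; rewrite orbT.
case: ifP => _; first by rewrite inE => /predU1P[->|/IHl->]; rewrite ?eqxx ?orbT.
case: ifP => _ //; rewrite inE => /predU1P[->|/IHr->]; by rewrite ?eqxx ?orbT.
Qed.

Lemma root_mem_path_to t i : i \in labels t ->
  Defs.root t \in map Defs.root (path_to t i).
Proof.
case: t => //= l x r i_in.
case: ifP => [_|xi]; first exact: mem_head.
case: ifP => [_|il]; first exact: mem_head.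
case: ifP => [_|ir]; first exact: mem_head.
by move: i_in; rewrite mem_cat inE il ir eq_sym xi.
Qed.

Lemma inv_node_cons x M j v : x \notin labels v ->
  inv_node (Some x :: M) j v = inv_node M j v.
Proof.
case: v => [|l y r] //= x_notin; rewrite inE.
case: l x_notin => [|a z b] //= x_notin.
suff -> : (Some z == Some x) = false by [].
by apply: contraNF x_notin => /eqP[->]; rewrite !mem_cat mem_head orbT.
Qed.

Lemma inv_node_out M j v : j \notin labels v -> inv_node M j v = false.
Proof.
case: v => [|l y r] //=; rewrite mem_cat inE !negb_or => /and3P[_ jy jr].
by rewrite (negbTE jr) (negbTE jy) andbF.
Qed.

Lemma tree_inv_pair_out t i j : j \notin labels t -> tree_inv_pair t i j = false.
Proof.
move=> j_notin; rewrite tree_inv_pairE (@eq_has_path_to _ _ _ pred0).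
  by rewrite has_pred0 andbF.
by move=> v v_sub; apply/inv_node_out/(contra (v_sub j)).
Qed.

Lemma has_inv_node_cons x M t i j : x \notin labels t ->
  has (inv_node (Some x :: M) j) (path_to t i) = has (inv_node M j) (path_to t i).
Proof.
move=> x_notin; apply: eq_has_path_to => v v_sub.
exact/inv_node_cons/(contra (v_sub x)).
Qed.

Lemma tree_inv_pair_root l x r j : x \notin labels l ->
  tree_inv_pair (Node l x r) x j = false.
Proof.
move=> x_notin; rewrite tree_inv_pairE /= eqxx /= orbF inE.
case: l x_notin => [|a z b] x_notin; first by rewrite andbF.
suff -> : (Some z == Some x) = false by rewrite /= andbF.
by apply: contraNF x_notin => /eqP[->]; rewrite mem_cat mem_head orbT.
Qed.

Lemma tree_inv_pair_left l x r i j : x \notin labels l -> i \in labels l ->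
  tree_inv_pair (Node l x r) i j =
  (j < i) && [|| j \in labels r, j == x | tree_inv_pair l i j].
Proof.
move=> x_notin i_in; have xi : (x == i) = false by apply: contraNF x_notin => /eqP->.
rewrite !tree_inv_pairE /= xi i_in /= inE root_mem_path_to // orbT /=.
by rewrite has_inv_node_cons //; case: (j < i); rewrite ?orbA.
Qed.

Lemma root_notin_map_Some t s : {in labels t, forall y, y \notin s} ->
  Defs.root t \notin map Some s.
Proof.
case: t => [_|l y r t_notin] /=; first by apply/mapP => -[].
by rewrite (mem_map (@Some_inj _)) t_notin // mem_cat mem_head orbT.
Qed.

Lemma tree_inv_pair_right l x r i j : uniq (labels (Node l x r)) ->
  i \in labels r -> tree_inv_pair (Node l x r) i j = tree_inv_pair r i j.
Proof.
move=> t_uniq i_in; have [lr_uniq _ _] := uniq_labels_node t_uniq.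
rewrite mem_cat negb_or => /andP[x_l x_r].
have xi : (x == i) = false by apply: contraNF x_r => /eqP->.
have il : (i \in labels l) = false.
  by apply: contraTF i_in => /(uniq_cat_notin lr_uniq).
have root_l : Defs.root l \notin map Some (x :: labels r).
  apply: root_notin_map_Some => y y_l.
  rewrite inE negb_or (uniq_cat_notin lr_uniq y_l) andbT.
  by apply: contraNneq x_l => <-.
have root_l_path : (Defs.root l \in Some x :: map Defs.root (path_to r i)) = false.
  apply: contraNF root_l; rewrite !inE => /predU1P[->|/map_root_path_to ->];
    by rewrite ?eqxx ?orbT.
by rewrite !tree_inv_pairE /= xi il i_in /= root_l_path /= has_inv_node_cons.
Qed.

Lemma inv_tree_node l x r : increasing (Node l x r) -> uniq (labels (Node l x r)) ->
  inv_tree (Node l x r) =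
  inv_tree l + inv_tree r + \sum_(i <- labels l) \sum_(j <- x :: labels r) (j < i).
Proof.
move=> t_inc t_uniq; have x_l := root_notin_left t_inc.
have [lr_uniq _ _] := uniq_labels_node t_uniq.
rewrite mem_cat negb_or => /andP[_ x_r].
set t := Node l x r; set s := labels t.
have row_x : \sum_(j <- s) tree_inv_pair t x j = 0.
  by apply: big1 => j _; rewrite tree_inv_pair_root.
have row_r i : i \in labels r ->
    \sum_(j <- s) tree_inv_pair t i j = \sum_(j <- labels r) tree_inv_pair r i j.
  move=> i_r; under eq_bigr => j _ do rewrite tree_inv_pair_right //.
  rewrite big_cat big_cons /= (tree_inv_pair_out i x_r) big1_seq // => j /andP[_ j_l].
  by rewrite tree_inv_pair_out // (uniq_cat_notin lr_uniq j_l).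
have row_l i : i \in labels l ->
    \sum_(j <- s) tree_inv_pair t i j =
    \sum_(j <- labels l) tree_inv_pair l i j + \sum_(j <- x :: labels r) (j < i).
  move=> i_l; rewrite big_cat; congr (_ + _); apply: eq_big_seq => j j_in.
    have j_r := uniq_cat_notin lr_uniq j_in.
    have jx : (j == x) = false by apply: contraNF x_l => /eqP<-.
    by rewrite tree_inv_pair_left // (negbTE j_r) jx tree_inv_pairE andbA andbb.
  rewrite tree_inv_pair_left //; move: j_in; rewrite inE => /predU1P[->|->];
    by rewrite ?eqxx ?orbT ?andbT.
rewrite {1}/inv_tree big_cat big_cons row_x (eq_big_seq _ row_l) (eq_big_seq _ row_r).
by rewrite big_split /= add0n addnAC.
Qed.

Lemma inv_tree_labels t : increasing t -> uniq (labels t) ->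
  inv_tree t = inv_word (labels t).
Proof.
elim: t => [|l IHl x r IHr] t_inc t_uniq.
  by rewrite /inv_tree /inv_word big_nil big_geq.
case/and3P: (t_inc) => /allP x_lt l_inc r_inc.
have [_ l_uniq r_uniq _] := uniq_labels_node t_uniq.
rewrite inv_tree_node // IHl // IHr // [labels _]/= inv_word_cat inv_word_cons.
rewrite [\sum_(j <- labels r) _]big1_seq ?add0n // => j /andP[_ j_r].
by rewrite ltnNge ltnW // x_lt // mem_cat j_r orbT.
Qed.
Theorem proposition6p4 (n : nat) :
  (* Psi : And^I_n -> T^I_n is a bijection *)
  ((forall pi, AndI n pi -> AndreITree n (Psi pi)) /\
   (forall pi1 pi2, AndI n pi1 -> AndI n pi2 -> Psi pi1 = Psi pi2 -> pi1 = pi2) /\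
   (forall T, AndreITree n T -> exists2 pi, AndI n pi & Psi pi = T)) /\
  (* Psi : And^II_n -> T^II_n is a bijection *)
  ((forall pi, AndII n pi -> AndreIITree n (Psi pi)) /\
   (forall pi1 pi2, AndII n pi1 -> AndII n pi2 -> Psi pi1 = Psi pi2 -> pi1 = pi2) /\
   (forall T, AndreIITree n T -> exists2 pi, AndII n pi & Psi pi = T)) /\
  (* statistics *)
  (forall pi, AndI n pi \/ AndII n pi ->
     leaves (Psi pi) = des pi /\ inv_tree (Psi pi) = inv_word pi).
Proof.
split; [split; [|split] | split; [split; [|split] |]].
- by move=> pi; rewrite AndreITree_Psi.
- by move=> pi1 pi2 _ _ /Psi_inj.
- move=> T T_andre; have /andP[/andP[_ T_inc] _] := T_andre.
  by exists (labels T); rewrite -?AndreITree_Psi Psi_labels.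
- by move=> pi; rewrite AndreIITree_Psi.
- by move=> pi1 pi2 _ _ /Psi_inj.
- move=> T T_andre; have /andP[/andP[_ T_inc] _] := T_andre.
  by exists (labels T); rewrite -?AndreIITree_Psi Psi_labels.
move=> pi pi_andre.
have pi_perm : is_perm_word n pi by case: pi_andre => /andP[].
have pi_uniq := perm_word_uniq pi_perm.
have Psi_nlo : no_left_only (Psi pi).
  case: pi_andre; rewrite -?AndreITree_Psi -?AndreIITree_Psi => /andP[_].
    exact: andreIT_no_left_only.
  exact: andreIIT_no_left_only.
rewrite leaves_des ?inv_tree_labels ?increasing_Psi ?labels_Psi //.
exact: perm_word_neq0 pi_perm.
Qed.
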